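(* For every real $M\ge 0$ and positive integers $N$ and $K$, with $\mathcal{N}=\{1,\dots,N\}$, \[ R(M,N,K)\le 72\,\bar{R}(M,\mathcal{N},K). \]
   Context: Caching problem: a server holds $N$ files of $F$ bits each, connected through a shared error-free link to $K$ users each with a cache of $MF$ bits. In the placement phase each user stores an arbitrary function of the files of at most $MF$ bits; in the delivery phase each user requests a file, the server sends a message over the shared link, and each user must reconstruct its requested file from the message and its cache. The rate for a demand vector is message length divided by $F$. $\bar{R}(M,\mathcal{N},K)$ is the optimal expected rate (infimum over all schemes of the expected rate, achievable with vanishing error probability for all large $F$) when the $K$ demands are i.i.d. uniform over $\mathcal{N}$. The function $R$ is defined by $R(M,N,K)=(1-M/N)\min\{\tfrac{N}{M}(1-(1-M/N)^K),N\}$ for $M\in(0,N]$, $R(0,N,K)=\min\{N,K\}$, and $R(M,N,K)=0$ for $M>N$. *)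

From HB Require Import structures.
From mathcomp Require Import all_boot all_order all_algebra.
From mathcomp Require Import boolp classical_sets reals.
 Unset Printing Implicit Defensive.
Import Order.TTheory GRing.Theory Num.Theory.
Local Open Scope ring_scope.
Local Open Scope classical_set_scope.

Definition files (N F : nat) := {ffun 'I_N -> F.-tuple bool}.
Definition demands (N K : nat) := {ffun 'I_K -> 'I_N}.

(** A caching scheme for N files of F bits, K users, caches of c bits.
    - [cache k W] : content of user k's cache (arbitrary function of the files);
    - [len d]     : length in bits of the message sent for demand vector d;
    - [enc d W]   : message sent over the shared link for demand d;
    - [dec d k X Z] : user k's estimate of its requested file W (d k) from the
                      message X and its cache content Z (demand d is known). *)
Record scheme (N K F c : nat) := Scheme {
  cache : 'I_K -> files N F -> c.-tuple bool;
  len : demands N K -> nat;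
  enc : forall d : demands N K, files N F -> (len d).-tuple bool;
  dec : forall d : demands N K, 'I_K -> (len d).-tuple bool -> c.-tuple bool ->
        F.-tuple bool }.

Section SchemeDefs.
Variable R : realType.
Variables N K F c : nat.
Implicit Type S : scheme N K F c.

(** Probability (files i.i.d. uniform) that, for demand d, some user decodes
    its requested file incorrectly. *)
Definition err_prob S (d : demands N K) : R :=
  #|[set W : files N F | [exists k : 'I_K,
       @dec _ _ _ _ S d k (@enc _ _ _ _ S d W) (@cache _ _ _ _ S k W) != W (d k)]]|%:R
  / #|{: files N F}|%:R.

(** Expected rate when the demands are i.i.d. uniform over the N files:
    average over all demand vectors of (message length)/F. *)
Definition exp_rate S : R :=
  (\sum_(d : demands N K) (@len _ _ _ _ S d)%:R / F%:R) / #|{: demands N K}|%:R.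
End SchemeDefs.

Definition achievable (R : realType) (M : R) (N K : nat) (r : R) : Prop :=
  forall eps : R, 0 < eps ->
  exists F0 : nat, forall F : nat, (F0 <= F)%N ->
  exists c : nat, c%:R <= M * F%:R /\
  exists S : scheme N K F c,
    @exp_rate R _ _ _ _ S <= r /\ forall d : demands N K, @err_prob R _ _ _ _ S d < eps.

Definition Rbar (R : realType) (M : R) (N K : nat) : R :=
  inf [set r | @achievable R M N K r].

Definition Rfun (R : realType) (M : R) (N K : nat) : R :=
  if M == 0 then Num.min N%:R K%:R
  else if M <= N%:R then
    (1 - M / N%:R) * Num.min (N%:R / M * (1 - (1 - M / N%:R) ^+ K)) N%:R
  else 0.

From HB Require Import structures.
From mathcomp Require Import all_boot all_order all_algebra.
From mathcomp Require Import boolp classical_sets reals.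
From mathcomp Require Import zify ring lra.
Import Order.TTheory GRing.Theory Num.Theory.
Set Implicit Arguments. Unset Strict Implicit. Unset Printing Implicit Defensive.
Local Open Scope ring_scope.

(* Lower bound (cut-set argument).  Take s <= K users and m <= N cyclic shifts
   d + i (i < m) of a demand vector d.  From the caches of the first s users and
   the m messages for the shifted demands, these users decode every file they
   request in some shift; outside a small set of file realisations, this
   information together with the remaining files determines all the files, so
   F |D(d)| <= s c + (total length of the m messages), where D(d) is the set of
   requested files.  For uniform d, the expected size of D(d) is
   N (1 - (1 - m/N)^s), whence m Rbar >= N (1 - (1 - m/N)^s) - s M.

   Upper bound.  R(M,N,K) <= min(N, K), R(M,N,K) <= N/M and, for M <= N,
   R(M,N,K) <= (1 - M/N) N/M.  When N <= 8 M, the choice s = 1, m = N gives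
   Rbar >= 1 - M/N >= R/8.  Otherwise m = floor(4M) + 1 and s = min(K, N / m)
   give Rbar >= s/4 while R(M,N,K) <= 18 s. *)

Lemma prodn_ord_split (K s a b : nat) : (s <= K)%N ->
  (\prod_(k < K) (if (k < s)%N then a else b) = a ^ s * b ^ (K - s))%N.
Proof.
move=> sK; rewrite -(big_mkord xpredT (fun k => if (k < s)%N then a else b)).
rewrite (big_cat_nat (leq0n s) sK) /=.
rewrite (eq_big_nat _ _ (F2 := fun=> a)) => [|i /andP[_ ->] //].
rewrite [X in (_ * X)%N](eq_big_nat _ _ (F2 := fun=> b)).
  by rewrite !prod_nat_const_nat subn0.
by move=> i /andP[si _]; rewrite ltnNge si.
Qed.

Lemma card_bigcup_le (T : finType) m (E : 'I_m -> {set T}) :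
  (#|\bigcup_(i < m) E i| <= \sum_(i < m) #|E i|)%N.
Proof.
elim/big_ind2: _ => [|m1 A m2 B Am1 Bm2|//]; first by rewrite cards0.
exact: leq_trans (leq_card_setU A B) (leq_add Am1 Bm2).
Qed.

Definition decoding_errors N K F c (S : scheme N K F c) (d : demands N K) :
    {set files N F} :=
  [set W | [exists k, @dec _ _ _ _ S d k (@enc _ _ _ _ S d W) (@cache _ _ _ _ S k W) != W (d k)]].

Lemma err_probE (R : realType) N K F c (S : scheme N K F c) d :
  @err_prob R _ _ _ _ S d = #|decoding_errors S d|%:R / #|{: files N F}|%:R.
Proof.
congr (_%:R / _); apply: eq_card => W; rewrite !inE.
by apply/idP/idP => [/asboolP|Werr]; last apply/asboolP.
Qed.

Section CutSet.
Variables (N' K F c : nat) (S : scheme N'.+1 K F c).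
Local Notation N := N'.+1.
Local Notation cacheS := (@cache _ _ _ _ S).
Local Notation encS := (@enc _ _ _ _ S).
Local Notation decS := (@dec _ _ _ _ S).
Local Notation lenS := (@len _ _ _ _ S).

Definition shift_demands (i : nat) (d : demands N K) : demands N K :=
  [ffun k => d k + inord i].

Lemma shift_demands_inj i : injective (shift_demands i).
Proof.
move=> d1 d2 /ffunP e; apply/ffunP => k.
by move: (e k); rewrite !ffunE => /addIr.
Qed.

Variables (s m : nat) (sK : (s <= K)%N).

Definition requested_files (d : demands N K) : {set 'I_N} :=
  [set j | [exists k : 'I_s, exists i : 'I_m, j == shift_demands i d (widen_ord sK k)]].

Definition observation (d : demands N K) (W : files N F) :=
  ([ffun k : 'I_s => cacheS (widen_ord sK k) W],
   [ffun i : 'I_m => encS (shift_demands i d) W]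
     : {dffun forall i : 'I_m, (lenS (shift_demands i d)).-tuple bool},
   [ffun j : {j | j \notin requested_files d} => W (val j)]).

Lemma observation_inj d :
  {in ~: \bigcup_(i < m) decoding_errors S (shift_demands i d) &,
   injective (observation d)}.
Proof.
move=> W1 W2; rewrite !inE => /bigcupP W1ok /bigcupP W2ok [ecache emsg erest].
apply/ffunP => j; have [jD|jD] := boolP (j \in requested_files d); last first.
  by move/ffunP: erest => /(_ (exist _ j jD)); rewrite !ffunE.
move: jD; rewrite inE => /existsP[k /existsP[i /eqP ->]].
have decodes W : ~ (exists2 i0, i0 \in 'I_m & W \in decoding_errors S (shift_demands i0 d)) ->
    W (shift_demands i d (widen_ord sK k)) =
    decS _ (widen_ord sK k) (encS (shift_demands i d) W) (cacheS (widen_ord sK k) W).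
  move=> Wok; apply/esym/eqP/negPn/negP => Werr; apply: Wok.
  by exists i => //; rewrite inE; apply/existsP; exists (widen_ord sK k).
rewrite (decodes _ W1ok) (decodes _ W2ok).
move/ffunP: ecache => /(_ k); rewrite !ffunE => ->.
by move/ffunP: emsg => /(_ i); rewrite !ffunE => ->.
Qed.

Lemma card_decodable_files d :
  (#|~: \bigcup_(i < m) decoding_errors S (shift_demands i d)| <=
   2 ^ (s * c + \sum_(i < m) lenS (shift_demands i d) + F * #|~: requested_files d|))%N.
Proof.
rewrite -(card_in_imset (@observation_inj d)); apply: leq_trans (max_card _) _.
rewrite !card_prod !card_ffun card_dep_ffun foldrE big_map big_enum /=.
rewrite !card_tuple card_bool card_ord card_sig.
under eq_bigr do rewrite card_tuple card_bool.
rewrite -expn_sum -!expnM -!expnD mulnC leq_exp2l //.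
suff -> : #|[pred j | j \notin requested_files d]| = #|~: requested_files d| by [].
by apply: eq_card => j; rewrite finset.in_setC.
Qed.

Lemma cut_set_bound d :
  (2 * #|\bigcup_(i < m) decoding_errors S (shift_demands i d)| < #|{: files N F}|)%N ->
  (F * #|requested_files d| <= s * c + \sum_(i < m) lenS (shift_demands i d))%N.
Proof.
move=> Esmall; set E := \bigcup_(i < m) _ in Esmall *.
have partition := cardsC E; have partitionD := cardsC (requested_files d).
rewrite card_ord in partitionD.
have decodable := card_decodable_files d; rewrite -/E in decodable.
rewrite card_ffun card_tuple card_bool card_ord -expnM in partition Esmall.
have : (2 ^ (F * N) < 2 ^ (s * c + \sum_(i < m) lenS (shift_demands i d) +
                                F * #|~: requested_files d|).+1)%N.
  rewrite expnS; apply: leq_trans (leq_mul (leqnn 2) decodable); lia.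
rewrite ltn_exp2l // => ?; nia.
Qed.

Hypothesis mN : (m <= N)%N.

Lemma card_avoiding_shifts (j : 'I_N) :
  #|[set x : 'I_N | [forall i : 'I_m, j != x + inord i]]| = (N - m)%N.
Proof.
have -> : [set x : 'I_N | [forall i : 'I_m, j != x + inord i]] =
          ~: [set j - inord i | i : 'I_m].
  apply/setP => x; rewrite !inE; apply/forallP/idP => [avoid|].
    by apply/imsetP => -[i _ xE]; move: (avoid i); rewrite xE subrK eqxx.
  move=> xN i; apply: contra xN => /eqP ->; apply/imsetP; exists i => //.
  by rewrite addrK.
have := cardsC [set j - inord i | i : 'I_m]; rewrite card_ord card_imset.
  by rewrite card_ord => total; apply/eqP; rewrite -(eqn_add2l m) subnKC // total.
move=> i1 i2 /addrI/oppr_inj/(congr1 (@nat_of_ord _)); rewrite !inordK; last 2 first.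
- exact: leq_trans (ltn_ord i2) mN.
- exact: leq_trans (ltn_ord i1) mN.
exact: val_inj.
Qed.

Lemma sum_card_requested_files :
  (\sum_(d : demands N K) #|requested_files d| =
   N * (N ^ K - (N - m) ^ s * N ^ (K - s)))%N.
Proof.
under eq_bigr do rewrite -sum1_card big_mkcond /=.
rewrite exchange_big /= (eq_bigr (fun=> (N ^ K - (N - m) ^ s * N ^ (K - s))%N)).
  by rewrite big_const_ord iter_addn_0 mulnC.
move=> j _; rewrite -big_mkcond /= sum1dep_card.
pose avoid (k : 'I_K) :=
  [set x : 'I_N | (k < s)%N ==> [forall i : 'I_m, j != x + inord i]].
have notin_family : ~: [set d : demands N K | j \in requested_files d] =
                    [set d | d \in family avoid].
  apply/setP => d; rewrite !inE; apply/idP/familyP => [jN k|avoid_d].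
    rewrite inE; apply/implyP => ks; apply/forallP => i; apply: contra jN => /eqP jE.
    apply/existsP; exists (Ordinal ks); apply/existsP; exists i.
    by rewrite ffunE jE; apply/eqP; congr (d _ + _); apply: val_inj.
  apply/negP => /existsP[k /existsP[i /eqP jE]].
  move: (avoid_d (widen_ord sK k)); rewrite inE /= (ltn_ord k) /=.
  by move=> /forallP/(_ i); rewrite jE ffunE eqxx.
have card_family_avoid :
    #|[set d : demands N K | d \in family avoid]| = ((N - m) ^ s * N ^ (K - s))%N.
  rewrite cardsE card_family foldrE big_map big_enum /= -prodn_ord_split //.
  apply: eq_bigr => k _; rewrite /avoid; case: ifP => ks.
    by rewrite -(card_avoiding_shifts j); apply: eq_card => x; rewrite !inE.
  by rewrite -[RHS]card_ord; apply: eq_card => x; rewrite !inE.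
have := cardsC [set d : demands N K | j \in requested_files d].
rewrite notin_family card_family_avoid card_ffun !card_ord => <-.
by rewrite addnK.
Qed.

Lemma sum_cut_set_bound :
  (forall d, 2 * #|\bigcup_(i < m) decoding_errors S (shift_demands i d)| <
             #|{: files N F}|)%N ->
  (F * (N * (N ^ K - (N - m) ^ s * N ^ (K - s))) <=
   N ^ K * (s * c) + m * \sum_(d : demands N K) lenS d)%N.
Proof.
move=> Esmall; rewrite -sum_card_requested_files big_distrr /=.
apply: (@leq_trans (\sum_d (s * c + \sum_(i < m) lenS (shift_demands i d)))%N).
  by apply: leq_sum => d _; apply: cut_set_bound.
rewrite big_split /= sum_nat_const card_ffun !card_ord leq_add2l.
rewrite exchange_big /= (eq_bigr (fun=> \sum_(d : demands N K) lenS d)).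
  by rewrite sum_nat_const card_ord.
by move=> i _; exact: esym (reindex_inj (@shift_demands_inj i)).
Qed.
End CutSet.

Lemma union_decoding_errors_small (R : realType) N' K F c (S : scheme N'.+1 K F c) m :
  (0 < m)%N -> (forall d, @err_prob R _ _ _ _ S d < ((2 * m)%:R)^-1) ->
  forall d, (2 * #|\bigcup_(i < m) decoding_errors S (shift_demands i d)| <
             #|{: files N'.+1 F}|)%N.
Proof.
move=> m_gt0 err_small d.
set Q := #|{: files N'.+1 F}|.
have Q_gt0 : (0 < Q)%N by rewrite /Q card_ffun card_tuple card_bool !expn_gt0.
apply: leq_ltn_trans (leq_mul (leqnn 2) (card_bigcup_le _)) _.
rewrite -(ltr_nat R) natrM natr_sum.
have err_i (i : 'I_m) :
    (#|decoding_errors S (shift_demands i d)|%:R : R) < ((2 * m)%:R)^-1 * Q%:R.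
  by rewrite -ltr_pdivrMr ?ltr0n // -err_probE.
apply: (@lt_le_trans _ _ (2 * \sum_(i < m) ((2 * m)%:R^-1 * Q%:R : R))).
  rewrite ltr_pM2l ?ltr0n //; apply: ltr_sum => [|i _]; last exact: err_i.
  by apply/hasP; exists (Ordinal m_gt0); rewrite ?mem_index_enum.
have m0 : (m%:R : R) != 0 by rewrite pnatr_eq0 -lt0n.
rewrite sumr_const card_ord -mulr_natr natrM le_eqVlt; apply/orP; left.
by apply/eqP; field.
Qed.

Lemma exp_rateE (R : realType) N K F c (S : scheme N K F c) :
  @exp_rate R _ _ _ _ S = (\sum_d @len _ _ _ _ S d)%:R / (F%:R * (N ^ K)%:R).
Proof.
rewrite /exp_rate card_ffun !card_ord -mulr_suml natr_sum.
by rewrite invfM mulrA.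
Qed.

Lemma achievable_cut_set_bound (R : realType) (M r : R) N' K s m :
  (s <= K)%N -> (0 < m)%N -> (m <= N'.+1)%N -> 0 <= M ->
  @achievable R M N'.+1 K r ->
  N'.+1%:R * (1 - (1 - m%:R / N'.+1%:R) ^+ s) - s%:R * M <= m%:R * r.
Proof.
set N := N'.+1 => sK m_gt0 mN M_ge0 ach.
have [|F0 large] := ach ((2 * m)%:R^-1); first by rewrite invr_gt0 ltr0n muln_gt0.
have [c [cM [S [rate err]]]] := large F0.+1 (leqnSn _); set F := F0.+1 in cM S rate err.
have := sum_cut_set_bound sK mN (union_decoding_errors_small m_gt0 err).
set L := (\sum_d @len _ _ _ _ S d)%N; set X := ((N - m) ^ s * N ^ (K - s))%N.
have NK : (N ^ K = N ^ s * N ^ (K - s))%N by rewrite -expnD subnKC.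
have X_le : (X <= N ^ K)%N.
  rewrite /X NK leq_mul2r; apply/orP; right.
  by case: (posnP s) => [-> //|s_gt0]; rewrite leq_exp2r ?leq_subr.
have N_gt0 : 0 < (N%:R : R) by rewrite ltr0n.
have XE : (X%:R : R) = (1 - m%:R / N%:R) ^+ s * (N ^ K)%:R.
  rewrite /X NK !natrM !natrX natrB // mulrA -exprMn; congr (_ ^+ _ * _).
  by field; rewrite gt_eqF.
rewrite -(ler_nat R) !natrM natrD !natrM natrB // XE.
move: rate; rewrite exp_rateE ler_pdivrMr ?mulr_gt0 ?ltr0n ?expn_gt0 // => rate key.
rewrite -/N in key; set f := (F%:R : R) in cM rate key *; set P := ((N ^ K)%:R : R) in rate key *.
have f_gt0 : 0 < f by rewrite ltr0n.
have P_gt0 : 0 < P by rewrite ltr0n expn_gt0.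
rewrite -(ler_pM2l (mulr_gt0 f_gt0 P_gt0)).
have cache_le : P * (s%:R * c%:R) <= P * (s%:R * (M * f)).
  by rewrite (ler_wpM2l (ltW P_gt0)) // ler_wpM2l.
have rate_le : m%:R * L%:R <= m%:R * (r * (f * P)) by rewrite ler_wpM2l.
lra.
Qed.

Section PowerBounds.
Variable R : realFieldType.
Implicit Type x : R.

Lemma bernoulli_le x n : x <= 1 -> 1 - n%:R * x <= (1 - x) ^+ n.
Proof.
move=> x_le1; have onem_ge0 : 0 <= 1 - x by rewrite subr_ge0.
elim: n => [|n IH]; first by rewrite mul0r subr0 expr0.
have := ler_wpM2r onem_ge0 IH.
have : 0 <= (n%:R : R) by rewrite ler0n.
rewrite exprSr -natr1; nra.
Qed.

Lemma exprn_onem_mul_le1 x n : x <= 1 -> (1 - x) ^+ n * (1 + n%:R * x) <= 1.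
Proof.
move=> x_le1; have onem_ge0 : 0 <= 1 - x by rewrite subr_ge0.
elim: n => [|n IH]; first by rewrite expr0 mul0r addr0 mulr1.
have n_ge0 : 0 <= (n%:R : R) by rewrite ler0n.
have step : (1 - x) * (1 + (n%:R + 1) * x) <= 1 + n%:R * x by nra.
have := ler_wpM2l (exprn_ge0 n onem_ge0) step.
rewrite exprSr -natr1 -mulrA; lra.
Qed.

Lemma onem_exprn_ge x n : 0 <= x -> x <= 1 -> n%:R * x <= 1 ->
  n%:R * x / 2 <= 1 - (1 - x) ^+ n.
Proof.
move=> x_ge0 x_le1 nx_le1; have := exprn_onem_mul_le1 n x_le1.
have : 0 <= (1 - x) ^+ n by apply: exprn_ge0; lra.
have : 0 <= n%:R * x by rewrite mulr_ge0 ?ler0n.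
nra.
Qed.
End PowerBounds.

Section RfunBounds.
Variables (R : realType) (M : R) (N K : nat).
Hypotheses (N_gt0 : (0 < N)%N) (M_ge0 : 0 <= M).

Lemma Rfun_eq0 : N%:R < M -> Rfun R M N K = 0.
Proof.
move=> NM; rewrite /Rfun gt_eqF ?(le_lt_trans _ NM) ?ler0n //.
by rewrite leNgt NM.
Qed.

Let a := M / N%:R.
Let coded_rate := Num.min (N%:R / M * (1 - (1 - a) ^+ K)) N%:R.

Let Rfun_coded : 0 < M -> M <= N%:R -> Rfun R M N K = (1 - a) * coded_rate.
Proof. by move=> M_gt0 MN; rewrite /Rfun gt_eqF // MN. Qed.

Let onem_a_ge0 : M <= N%:R -> 0 <= 1 - a.
Proof. by move=> MN; rewrite subr_ge0 ler_pdivrMr ?ltr0n // mul1r. Qed.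

Let onem_a_le1 : 1 - a <= 1.
Proof. by rewrite gerBl divr_ge0 ?ler0n. Qed.

Let coded_rate_ge0 : M <= N%:R -> 0 <= coded_rate.
Proof.
move=> MN; rewrite le_min ler0n andbT mulr_ge0 ?divr_ge0 ?ler0n // subr_ge0.
exact: exprn_ile1 (onem_a_ge0 MN) onem_a_le1.
Qed.

Lemma Rfun_le_min : Rfun R M N K <= Num.min N%:R K%:R.
Proof.
have [->|M_neq0] := eqVneq M 0; first by rewrite /Rfun eqxx.
have M_gt0 : 0 < M by rewrite lt_def M_neq0.
have [MN|NM] := lerP M N%:R; last by rewrite Rfun_eq0 // le_min !ler0n.
rewrite Rfun_coded //; apply: le_trans (_ : coded_rate <= _).
  by rewrite ler_piMl ?coded_rate_ge0.
rewrite le_min !ge_min lexx orbT /=; apply/orP; left.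
have NMa : N%:R / M * a = 1 by rewrite /a mulrA divfK ?divff ?gt_eqF ?ltr0n.
have a_le1 : a <= 1 by have := onem_a_ge0 MN; lra.
have NM_ge0 : 0 <= N%:R / M by rewrite divr_ge0 ?ler0n ?ltW.
have := bernoulli_le K a_le1 => bern.
apply: le_trans (ler_wpM2l NM_ge0 (_ : _ <= K%:R * a)) _; first lra.
by rewrite mulrCA NMa mulr1.
Qed.

Lemma Rfun_le_onem_div : 0 < M -> M <= N%:R ->
  Rfun R M N K <= (1 - M / N%:R) * (N%:R / M).
Proof.
move=> M_gt0 MN; rewrite Rfun_coded // ler_wpM2l ?onem_a_ge0 // ge_min.
apply/orP; left; apply: ler_piMr; first by rewrite divr_ge0 ?ler0n ?ltW.
by rewrite gerBl exprn_ge0 ?onem_a_ge0.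
Qed.

Lemma Rfun_le_div : 0 < M -> Rfun R M N K <= N%:R / M.
Proof.
move=> M_gt0; have [MN|NM] := lerP M N%:R; last first.
  by rewrite Rfun_eq0 // divr_ge0 ?ler0n ?ltW.
apply: le_trans (Rfun_le_onem_div M_gt0 MN) _.
by apply: ler_piMl; rewrite ?gerBl divr_ge0 ?ler0n ?ltW.
Qed.
End RfunBounds.

Section Uncoded.
Variables N K F : nat.

Lemma card_files_tuple : #|{: files N F}| = #|{: (F * N).-tuple bool}|.
Proof. by rewrite card_ffun !card_tuple card_bool card_ord expnM. Qed.

Definition serialize (W : files N F) : (F * N).-tuple bool :=
  enum_val (cast_ord card_files_tuple (enum_rank W)).

Definition deserialize (X : (F * N).-tuple bool) : files N F :=
  enum_val (cast_ord (esym card_files_tuple) (enum_rank X)).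

Lemma serializeK : cancel serialize deserialize.
Proof. by move=> W; rewrite /deserialize enum_valK cast_ordK enum_rankK. Qed.

Definition uncoded_scheme : scheme N K F 0 :=
  @Scheme N K F 0 (fun _ _ => [tuple]) (fun _ => (F * N)%N) (fun _ W => serialize W)
         (fun d k X _ => deserialize X (d k)).
End Uncoded.

Lemma achievable_uncoded (R : realType) (M : R) N K :
  0 <= M -> @achievable R M N K N%:R.
Proof.
move=> M_ge0 eps eps_gt0; exists 0%N => F _; exists 0%N.
split; first by rewrite mulr_ge0.
exists (uncoded_scheme N K F); split.
  rewrite exp_rateE /= sum_nat_const card_ffun !card_ord.
  set Q := (F%:R * (N ^ K)%:R : R).
  have -> : ((N ^ K * (F * N))%:R : R) = N%:R * Q by rewrite /Q !natrM; ring.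
  by have [->|Q_neq0] := eqVneq Q 0; rewrite ?invr0 ?mulr0 ?mulfK.
move=> d; rewrite err_probE (_ : #|_| = 0%N) ?mul0r //.
by apply: eq_card0 => W; rewrite !inE; apply/existsP => -[k]; rewrite /= serializeK eqxx.
Qed.

Section OptimalRate.
Variables (R : realType) (M : R) (N K : nat).
Hypothesis M_ge0 : 0 <= M.

Lemma achievable_ge0 r : @achievable R M N K r -> 0 <= r.
Proof.
move=> /(_ 1 ltr01) [F0 /(_ F0 (leqnn _)) [c [_ [S [rate _]]]]].
apply: le_trans rate; rewrite exp_rateE divr_ge0 ?ler0n //.
by rewrite mulr_ge0 ?ler0n.
Qed.

Lemma le_Rbar x : (forall r, @achievable R M N K r -> x <= r) -> x <= Rbar R M N K.
Proof.
by move=> lb; apply: lb_le_inf => //; exists N%:R; apply: achievable_uncoded.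
Qed.

Lemma Rbar_ge0 : 0 <= Rbar R M N K.
Proof. exact/le_Rbar/achievable_ge0. Qed.
End OptimalRate.

Section LargeMemory.
Variables (R : realType) (M : R) (N' K : nat).
Hypotheses (M_ge0 : 0 <= M) (K_gt0 : (0 < K)%N).
Local Notation N := N'.+1.

Lemma onem_div_le_Rbar : 1 - M / N%:R <= Rbar R M N K.
Proof.
apply: le_Rbar => // r ach.
have := achievable_cut_set_bound K_gt0 (ltn0Sn N') (leqnn _) M_ge0 ach.
have N_gt0 : 0 < (N%:R : R) by rewrite ltr0n.
rewrite divff ?gt_eqF // subrr expr1 subr0 !mulr1 mul1r => NM_le.
by rewrite -(ler_pM2l N_gt0) mulrBr mulr1 mulrCA divff ?gt_eqF ?mulr1.
Qed.

Lemma Rfun_le_Rbar_large_memory : N%:R <= 8 * M -> Rfun R M N K <= 8 * Rbar R M N K.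
Proof.
move=> large; have [MN|NM] := lerP M N%:R; last first.
  by rewrite Rfun_eq0 // mulr_ge0 ?Rbar_ge0.
have N_gt0 : 0 < (N%:R : R) by rewrite ltr0n.
have M_gt0 : 0 < M by lra.
apply: le_trans (Rfun_le_onem_div K (ltn0Sn N') M_gt0 MN) _.
have NM_le8 : N%:R / M <= 8 by rewrite ler_pdivrMr.
have onem_ge0 : 0 <= 1 - M / N%:R by rewrite subr_ge0 ler_pdivrMr // mul1r.
apply: le_trans (ler_wpM2l onem_ge0 NM_le8) _.
by rewrite mulrC ler_pM2l ?onem_div_le_Rbar.
Qed.
End LargeMemory.

Section SmallMemory.
Variables (R : realType) (M : R) (N' K : nat).
Hypothesis M_ge0 : 0 <= M.
Local Notation N := N'.+1.
Hypothesis small : 8 * M < N%:R.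

Variable m : nat.
Hypotheses (four_M_lt_m : 4 * M < m%:R) (m_le : m%:R <= 4 * M + 1).
Local Notation s := (minn K (N %/ m)).

(* [lra] does not use section hypotheses, hence the explicit [move: (...)]. *)
Let m_gt0 : (0 < m)%N.
Proof. by rewrite -(ltr0n R); move: (M_ge0) (four_M_lt_m); lra. Qed.

Let m_le_N : (m <= N)%N.
Proof. by rewrite -ltnS -(ltr_nat R) -natr1; move: (M_ge0) (small) (m_le); lra. Qed.

Let s_le_K : (s <= K)%N. Proof. exact: geq_minl. Qed.

Let sm_le_N : (s * m <= N)%N.
Proof. by apply: leq_trans (leq_divM N m); rewrite leq_mul2r geq_minr orbT. Qed.

Lemma quarter_users_le_Rbar : s%:R / 4 <= Rbar R M N K.
Proof.
apply: le_Rbar => // r ach.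
have := achievable_cut_set_bound s_le_K m_gt0 m_le_N M_ge0 ach.
have N_gt0 : 0 < (N%:R : R) by rewrite ltr0n.
have m_gt0R : 0 < (m%:R : R) by rewrite ltr0n.
set x := m%:R / N%:R.
have x_ge0 : 0 <= x by rewrite divr_ge0 ?ler0n.
have x_le1 : x <= 1 by rewrite ler_pdivrMr // mul1r ler_nat.
have sx_le1 : s%:R * x <= 1 by rewrite mulrA ler_pdivrMr // mul1r -natrM ler_nat.
have Nsx : N%:R * (s%:R * x) = s%:R * m%:R.
  by rewrite /x; field; rewrite addrC natr1 pnatr_eq0.
have gain := onem_exprn_ge x_ge0 x_le1 sx_le1.
have s_ge0 : 0 <= (s%:R : R) by rewrite ler0n.
have sM : s%:R * M <= s%:R * m%:R / 4 by rewrite -mulrA ler_wpM2l //; move: (four_M_lt_m); lra.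
have half : s%:R * m%:R / 2 <= N%:R * (1 - (1 - x) ^+ s).
  by rewrite -Nsx -mulrA; apply: ler_wpM2l; first exact: ltW.
move=> cut; rewrite -(ler_pM2l m_gt0R); nra.
Qed.

Lemma Rfun_le_users : Rfun R M N K <= 18 * s%:R.
Proof.
have [KN|NK] := leqP K (N %/ m).
  apply: le_trans (Rfun_le_min K (ltn0Sn _) M_ge0) _.
  by rewrite ge_min; apply/orP; right; rewrite ler_peMl ?ler0n ?ler1n.
set q := (N %/ m)%N.
have q_gt0 : (0 < q)%N by rewrite divn_gt0.
have N_lt : N%:R < 2 * q%:R * m%:R :> R.
  rewrite -natrM -natrM ltr_nat; apply: leq_trans (ltn_ceil N m_gt0) _.
  by rewrite leq_mul2r; apply/orP; right; lia.
have q2_ge0 : 0 <= 2 * q%:R :> R by rewrite mulr_ge0 ?ler0n.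
have [M_le|M_gt] := lerP M 4^-1.
  apply: le_trans (Rfun_le_min K (ltn0Sn _) M_ge0) _; rewrite ge_min; apply/orP; left.
  have : 2 * q%:R * m%:R <= 2 * q%:R * 2 :> R.
    by apply: ler_wpM2l => //; move: (m_le); lra.
  lra.
have M_gt0 : 0 < M by lra.
apply: le_trans (Rfun_le_div K (ltn0Sn _) M_gt0) _; rewrite ler_pdivrMr //.
have : 2 * q%:R * m%:R <= 2 * q%:R * (8 * M) :> R.
  by apply: ler_wpM2l => //; move: (m_le); lra.
have : 0 <= q%:R * M by rewrite mulr_ge0 ?ler0n ?ltW.
lra.
Qed.
End SmallMemory.

Theorem claim1 (R : realType) (M : R) (N K : nat) :
  0 <= M -> (0 < N)%N -> (0 < K)%N ->
  @Rfun R M N K <= 72 * @Rbar R M N K.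
Proof.
case: N => // N' M_ge0 _ K_gt0.
have optimal_ge0 := Rbar_ge0 N'.+1 K M_ge0.
have [large|small] := lerP N'.+1%:R (8 * M).
  apply: le_trans (Rfun_le_Rbar_large_memory M_ge0 K_gt0 large) _.
  by apply: ler_wpM2r; rewrite ?ler_nat.
pose m := (Num.truncn (4 * M)).+1.
have four_M_lt_m : 4 * M < m%:R by exact: truncnS_gt.
have m_le : m%:R <= 4 * M + 1 by rewrite /m -natr1 lerD2r truncn_le mulr_ge0.
apply: le_trans (Rfun_le_users K M_ge0 small four_M_lt_m m_le) _.
have -> : (72 : R) = 18 * 4 by rewrite -natrM.
rewrite -mulrA ler_pM2l // mulrC -ler_pdivrMr //.
exact (quarter_users_le_Rbar K M_ge0 small four_M_lt_m m_le).
Qed.
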